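(* For each $l\in\{0,\dots,d-1\}$, writing $\varepsilon_{N,l}=q^{-dN-l}$, one has \[\lim_{N\to\infty} f^{-N}\sqrt{D}\,\Lambda_{\varepsilon_{N,l}}(f)=\mathfrak a_{d-1-l},\] where the convergence is in the Hausdorff metric on subsets of $k_\infty$ and $\mathfrak a_{d-1-l}=(f,fT,\dots,fT^{d-1-l})\subset A_{\infty_1}$.
   Context: Let $q$ be a power of a prime, $k=\mathbb F_q(T)$, $A=\mathbb F_q[T]$, $k_\infty=\mathbb F_q((1/T))$ with absolute value $|x|=q^{\deg_T x}$ (i.e. $q^{-v_\infty(x)}$). For $x\in k_\infty$ let $\|x\|$ be the distance from $x$ to the nearest element of $A$. For $f\in k_\infty$ and $\varepsilon>0$ let $\Lambda_\varepsilon(f)=\{\lambda\in A:\|\lambda f\|<\varepsilon\}$ (an $\mathbb F_q$-vector space). Let $f\in k_\infty\setminus k$ be a quadratic unit: $f$ is a root of $X^2-aX-b$ with $a\in A$ monic, $d:=\deg_T a\ge 1$, $b\in\mathbb F_q^*$, and $f$ is the root with $|f|=q^d$ (the conjugate $f^*$ has $|f^*|=q^{-d}$). Let $D=a^2+4b$, with $\sqrt D$ chosen so that $f=(a+\sqrt D)/2$ if the characteristic is odd, and $\sqrt D=a$ in characteristic $2$. Let $K=k(f)\subset k_\infty$, let $\infty_1$ be the place of $K$ induced by the embedding $K\subset k_\infty$ (so $v_{\infty_1}(f)=-d$), and let $A_{\infty_1}$ be the ring of elements of $K$ regular away from $\infty_1$; one has $A_{\infty_1}=\mathbb F_q[f,fT,\dots,fT^{d-1}]$.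 For $0\le i\le d-1$, $\mathfrak a_i$ denotes the ideal $(f,fT,\dots,fT^i)$ of $A_{\infty_1}$. *)

(* The completion k_oo = F_q((1/T)) is built concretely as
   Laurent series in T with coefficients bounded above. *)
From HB Require Import structures.
From mathcomp Require Import all_boot all_order all_algebra.
From mathcomp Require Import zify.
From Stdlib Require Import ClassicalEpsilon.
Set Implicit Arguments. Unset Strict Implicit. Unset Printing Implicit Defensive.
Import Order.TTheory GRing.Theory Num.Theory.
Local Open Scope ring_scope.

Section Laurent.
Variable F : finFieldType.

Definition qF : nat := #|F|.

Definition bounded_above (c : int -> F) :=
  exists n : int, forall i : int, n < i -> c i = 0.

(* k_oo : elements sum_{i <= n} c_i T^i, c_i = coefficient of T^i *)
Definition laurent := {c : int -> F | bounded_above c}.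
Definition lc (x : laurent) : int -> F := proj1_sig x.

Definition lub (x : laurent) : int :=
  proj1_sig (constructive_indefinite_description _ (proj2_sig x)).
Lemma lubP (x : laurent) i : lub x < i -> lc x i = 0.
Proof. exact: (proj2_sig (constructive_indefinite_description _ (proj2_sig x))). Qed.

Definition lconst_c (c : F) : int -> F := fun i => if i == 0 then c else 0.
Lemma lconst_b c : bounded_above (lconst_c c).
Proof. exists 0 => i hi; rewrite /lconst_c gt_eqF //. Qed.
Definition lconst c : laurent := exist _ _ (lconst_b c).
Definition lzero := lconst 0.
Definition lone := lconst 1.

Definition lpoly_c (p : {poly F}) : int -> F :=
  fun i => match i with Posz n => p`_n | Negz _ => 0 end.
Lemma lpoly_b p : bounded_above (lpoly_c p).
Proof.
exists (size p)%:Z => -[n|n] hi //=; apply: nth_default.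
by move: hi; rewrite ltz_nat => /ltnW.
Qed.
Definition lpoly p : laurent := exist _ _ (lpoly_b p).

Definition ladd_c (x y : laurent) : int -> F := fun i => lc x i + lc y i.
Lemma ladd_b x y : bounded_above (ladd_c x y).
Proof.
exists (Num.max (lub x) (lub y)) => i hi; rewrite /ladd_c !lubP ?addr0 //.
  by apply: le_lt_trans hi; rewrite le_max lexx orbT.
by apply: le_lt_trans hi; rewrite le_max lexx.
Qed.
Definition ladd x y : laurent := exist _ _ (ladd_b x y).

Definition lopp_c (x : laurent) : int -> F := fun i => - lc x i.
Lemma lopp_b x : bounded_above (lopp_c x).
Proof. by exists (lub x) => i hi; rewrite /lopp_c lubP ?oppr0. Qed.
Definition lopp x : laurent := exist _ _ (lopp_b x).
Definition lsub x y := ladd x (lopp y).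

(* Cauchy product: (xy)_k = sum_{i} x_i y_{k-i}, the (finitely many)
   possibly nonzero terms having lub y - k <= ... i.e. k - lub y <= i <= lub x *)
Definition lmul_c (x y : laurent) : int -> F := fun k =>
  \sum_(j < (absz (lub x + lub y - k)%R).+1)
     lc x (lub x - (j : nat)%:Z) * lc y (k - lub x + (j : nat)%:Z).
Lemma lmul_b x y : bounded_above (lmul_c x y).
Proof.
exists (lub x + lub y) => k hk; rewrite /lmul_c big1 // => j _.
rewrite [lc y _]lubP ?mulr0 //; lia.
Qed.
Definition lmul x y : laurent := exist _ _ (lmul_b x y).

Definition lexp (x : laurent) (n : nat) : laurent := iter n (lmul x) lone.

(* the multiplicative inverse (0 if none exists) *)
Definition linv (x : laurent) : laurent :=
  match excluded_middle_informative (exists y, lmul x y = lone) with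
  | left H => proj1_sig (constructive_indefinite_description _ H)
  | right _ => lzero
  end.

(* degree in T (i.e. -v_oo) of a nonzero element *)
Definition ldeg (x : laurent) : int :=
  epsilon (inhabits 0) (fun n => lc x n != 0 /\ forall i, n < i -> lc x i = 0).

Definition labs (x : laurent) : rat :=
  match excluded_middle_informative (exists i, lc x i != 0) with
  | left _ => (qF%:R : rat) ^ ldeg x
  | right _ => 0
  end.

(* Lambda_eps(f) = {lam in A : ||lam f|| < eps}, where ||x|| < eps means
   that the distance from x to A is < eps, i.e. |x - p| < eps for some p in A *)
Definition Lambda (f : laurent) (eps : rat) (lam : {poly F}) : Prop :=
  exists p : {poly F}, labs (lsub (lmul (lpoly lam) f) (lpoly p)) < eps.

Definition lT : laurent := lpoly 'X.

Inductive in_Ainf1 (d : nat) (f : laurent) : laurent -> Prop :=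
| Ainf1_const c : in_Ainf1 d f (lconst c)
| Ainf1_gen j : (j < d)%N -> in_Ainf1 d f (lmul f (lexp lT j))
| Ainf1_add x y : in_Ainf1 d f x -> in_Ainf1 d f y -> in_Ainf1 d f (ladd x y)
| Ainf1_mul x y : in_Ainf1 d f x -> in_Ainf1 d f y -> in_Ainf1 d f (lmul x y).

Inductive in_ideal (d : nat) (f : laurent) (i : nat) : laurent -> Prop :=
| ideal0 : in_ideal d f i lzero
| ideal_gen g j : in_Ainf1 d f g -> (j <= i)%N ->
    in_ideal d f i (lmul g (lmul f (lexp lT j)))
| ideal_add x y : in_ideal d f i x -> in_ideal d f i y -> in_ideal d f i (ladd x y).

(* sqrt D: f = (a + sqrt D)/2 in odd characteristic, sqrt D = a in char 2 *)
Definition sqrtD (a : {poly F}) (f : laurent) : laurent :=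
  if (2%N \in [pchar F]) then lpoly a else lsub (ladd f f) (lpoly a).

Definition hausdorff_lt (S T : laurent -> Prop) (e : rat) : Prop :=
  (forall x, S x -> exists y, T y /\ labs (lsub x y) < e) /\
  (forall y, T y -> exists x, S x /\ labs (lsub x y) < e).

Definition hausdorff_cvg (S : nat -> laurent -> Prop) (T : laurent -> Prop) :=
  forall e : rat, 0 < e -> exists N0 : nat, forall N : nat, (N0 <= N)%N ->
    hausdorff_lt (S N) T e.

End Laurent.

(* Let f* = a - f be the conjugate root: f f* = -b, hence |f*| = q^-d.
   Every u + v f with u, v in A has the conjugate u + v f*, and A_oo1 (resp.
   a_i) consists of those elements whose conjugate has absolute value at most
   1 (resp. q^(i-d)): one inclusion by induction on the generators, the other
   by stripping off leading terms c T^j f^(m+1) (and, for a_i, dividing by f).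
   If z = lam f - p is small, y = -f^-N (lam f* - p) has the conjugate
   -f*^-N z of absolute value at most q^(-l-1), so y lies in a_(d-1-l), while
   f^-N sqrt(D) lam - y = f^-N z has absolute value below q^-N.  Conversely,
   for y in a_(d-1-l) write f^N y = U + V f and take lam = V, p = U + V a. *)

From HB Require Import structures.
From mathcomp Require Import all_boot all_order all_algebra.
From mathcomp Require Import zify ring boolp.
From Stdlib Require Import ClassicalEpsilon.
Set Implicit Arguments. Unset Strict Implicit. Unset Printing Implicit Defensive.
Import Order.TTheory GRing.Theory Num.Theory.
Local Open Scope ring_scope.

Section LaurentRing.
Variable F : finFieldType.
Local Notation R := (laurent F).

Lemma laurent_ext (x y : R) : lc x =1 lc y -> x = y.
Proof.
case: x y => [cx hx] [cy hy] /funext /= E; subst cy.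
by congr exist; apply: Prop_irrelevance.
Qed.

(* [deg_le x n] says [|x| <= q ^ n]. *)
Definition deg_le (x : R) (n : int) := forall i, n < i -> lc x i = 0.

Lemma deg_le_lub (x : R) : deg_le x (lub x).
Proof. by move=> i /lubP. Qed.
Arguments deg_le_lub : clear implicits.

Lemma deg_le_trans (x : R) m n : m <= n -> deg_le x m -> deg_le x n.
Proof. by move=> mn hx i ni; apply: hx; lia. Qed.

Lemma lc_ladd (x y : R) i : lc (ladd x y) i = lc x i + lc y i.
Proof. by []. Qed.

Lemma lc_lopp (x : R) i : lc (lopp x) i = - lc x i.
Proof. by []. Qed.

Definition window_sum (g : int -> F) (top : int) (len : nat) :=
  \sum_(j < len) g (top - j%:Z).

Lemma window_sum_raise g top len (s : nat) :
  (forall i, top < i -> i <= top + s%:Z -> g i = 0) ->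
  window_sum g (top + s%:Z) (len + s) = window_sum g top len.
Proof.
move=> g0; rewrite /window_sum addnC big_split_ord /= big1 ?add0r.
  by apply: eq_bigr => j _; congr g; lia.
by move=> j _; apply: g0 => /=; have := ltn_ord j; lia.
Qed.

Lemma window_sum_lower g top len (t : nat) :
  (forall i, top - (len + t)%:Z < i -> i <= top - len%:Z -> g i = 0) ->
  window_sum g top (len + t) = window_sum g top len.
Proof.
move=> g0; rewrite /window_sum big_split_ord /= [X in _ + X]big1 ?addr0 //.
by move=> j _; apply: g0 => /=; have := ltn_ord j; lia.
Qed.

Lemma window_sum_eq g lo hi top1 len1 top2 len2 :
  (forall i, hi < i -> g i = 0) -> (forall i, i < lo -> g i = 0) ->
  hi <= top1 -> top1 - len1%:Z < lo -> hi <= top2 -> top2 - len2%:Z < lo ->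
  window_sum g top1 len1 = window_sum g top2 len2.
Proof.
move=> g_hi g_lo.
have raise top len s : hi <= top ->
    window_sum g (top + s%:Z) (len + s) = window_sum g top len.
  by move=> htop; apply: window_sum_raise => i hi1 _; apply: g_hi; lia.
have lower top len t : top - len%:Z < lo ->
    window_sum g top (len + t) = window_sum g top len.
  by move=> hlen; apply: window_sum_lower => i _ hi1; apply: g_lo; lia.
suff common top top' n1 n2 : hi <= top -> top - n1%:Z < lo ->
    top' - n2%:Z < lo -> top <= top' ->
    window_sum g top n1 = window_sum g top' n2.
  move=> h1 l1 h2 l2; case: (lerP top1 top2) => h12; first exact: common.
  by symmetry; apply: common => //; lia.
move=> h1 l1 l2 le12; pose s := absz (top' - top).
have e : top' = top + s%:Z by rewrite /s; lia.
rewrite e in l2 *; rewrite -(raise top n1 s h1).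
rewrite -(lower _ (n1 + s) n2)%N; last by lia.
by rewrite -(lower _ n2 (n1 + s)%N) 1?addnC //; lia.
Qed.

Lemma lc_lmul_window (x y : R) mx my top len k :
  deg_le x mx -> deg_le y my -> mx <= top -> top - len%:Z < k - my ->
  lc (lmul x y) k = \sum_(j < len) lc x (top - j%:Z) * lc y (k - top + j%:Z).
Proof.
move=> hx hy htop hlen; pose g i := lc x i * lc y (k - i).
have -> : lc (lmul x y) k = window_sum g (lub x) (absz (lub x + lub y - k)%R).+1.
  by apply: eq_bigr => j _; rewrite /g; congr (_ * lc y _); lia.
have -> : \sum_(j < len) lc x (top - j%:Z) * lc y (k - top + j%:Z) =
    window_sum g top len.
  by apply: eq_bigr => j _; rewrite /g; congr (_ * lc y _); lia.
apply: (@window_sum_eq g (Num.max (k - my) (k - lub y)) (Num.min mx (lub x))).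
- by move=> i; rewrite gt_min /g => /orP[/hx|/lubP] ->; rewrite mul0r.
- move=> i; rewrite lt_max /g => /orP[h|h]; first by rewrite hy ?mulr0 //; lia.
  by rewrite [lc y _]lubP ?mulr0 //; lia.
- by rewrite ge_min lexx orbT.
- by rewrite lt_max; apply/orP; right; lia.
- by rewrite ge_min htop.
- by rewrite lt_max hlen.
Qed.

Lemma deg_le_lmul (x y : R) m n :
  deg_le x m -> deg_le y n -> deg_le (lmul x y) (m + n).
Proof.
by move=> hx hy i hi; rewrite (lc_lmul_window (top := m) (len := 0) hx hy)
  ?big_ord0 //; lia.
Qed.

Lemma lc_lmul_top (x y : R) m n : deg_le x m -> deg_le y n ->
  lc (lmul x y) (m + n) = lc x m * lc y n.
Proof.
move=> hx hy; rewrite (lc_lmul_window (top := m) (len := 1) hx hy) ?big_ord1 //;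
  last by lia.
by congr (lc x _ * lc y _) => /=; lia.
Qed.

Lemma lmulC : commutative (@lmul F).
Proof.
move=> x y; apply: laurent_ext => k.
pose len := (absz (lub x + lub y - k)%R).+1.
rewrite (lc_lmul_window (top := lub x) (len := len) (deg_le_lub x) (deg_le_lub y));
  [|by []|by rewrite /len; lia].
rewrite (lc_lmul_window (top := k - lub x + len%:Z - 1) (len := len)
  (deg_le_lub y) (deg_le_lub x)); try by rewrite /len; lia.
rewrite (reindex_inj rev_ord_inj); apply: eq_bigr => j _; rewrite mulrC.
have hj := ltn_ord j; by congr (lc y _ * lc x _) => /=; lia.
Qed.

Definition window_poly (x : R) (top : int) (len : nat) : {poly F} :=
  \poly_(n < len) lc x (top - n%:Z).

Lemma lc_lmul_window_poly (x y : R) mx my len n :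
  deg_le x mx -> deg_le y my -> (n < len)%N ->
  lc (lmul x y) (mx + my - n%:Z) =
    (window_poly x mx len * window_poly y my len)`_n.
Proof.
move=> hx hy hn; rewrite (lc_lmul_window (top := mx) (len := n.+1) hx hy) //;
  last by lia.
rewrite coefM; apply: eq_bigr => j _; have hj := ltn_ord j.
by rewrite !coef_poly !ifT; [congr (_ * lc y _) => /=| |]; lia.
Qed.

Lemma coefMl_eq (p p' q : {poly F}) n :
  (forall i, (i <= n)%N -> p`_i = p'`_i) -> (p * q)`_n = (p' * q)`_n.
Proof. by move=> E; rewrite !coefM; apply: eq_bigr => j _; rewrite E // -ltnS. Qed.

(* Coefficients of a triple product only depend on finitely many coefficients
   of the factors, so associativity reduces to that of polynomials. *)
Lemma lmulA : associative (@lmul F).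
Proof.
move=> x y z; apply: laurent_ext => k.
have hx := deg_le_lub x; have hy := deg_le_lub y; have hz := deg_le_lub z.
set mx := lub x in hx *; set my := lub y in hy *; set mz := lub z in hz *.
have [hk|hk] := ltrP (mx + my + mz) k.
  rewrite (deg_le_lmul hx (deg_le_lmul hy hz)) ?(deg_le_lmul (deg_le_lmul hx hy) hz)
    //; lia.
pose n := absz (mx + my + mz - k)%R.
have -> : k = mx + (my + mz) - n%:Z by rewrite /n; lia.
rewrite (lc_lmul_window_poly (len := n.+1) hx (deg_le_lmul hy hz)) //.
have -> : mx + (my + mz) - n%:Z = mx + my + mz - n%:Z by lia.
rewrite (lc_lmul_window_poly (len := n.+1) (deg_le_lmul hx hy) hz) //.
have trunc_lmul u v mu mv : deg_le u mu -> deg_le v mv -> forall i, (i <= n)%N ->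
    (window_poly (lmul u v) (mu + mv) n.+1)`_i =
    (window_poly u mu n.+1 * window_poly v mv n.+1)`_i.
  by move=> hu hv i hi; rewrite coef_poly ifT ?ltnS // -lc_lmul_window_poly.
rewrite mulrC (coefMl_eq _ (trunc_lmul _ _ _ _ hy hz)).
by rewrite (coefMl_eq _ (trunc_lmul _ _ _ _ hx hy)) mulrC mulrA.
Qed.

Lemma lmul1 : left_id (lone F) (@lmul F).
Proof.
move=> x; apply: laurent_ext => k.
have h1 : deg_le (lone F) 0 by move=> i hi; rewrite /= /lconst_c gt_eqF.
rewrite (lc_lmul_window (top := 0) (len := (absz (lub x - k)%R).+1) h1 (deg_le_lub x))
  //; last by lia.
rewrite big_ord_recl /= big1 ?addr0 => [|j _]; last by rewrite /lconst_c mul0r.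
by rewrite /lconst_c /= mul1r; congr (lc x _); lia.
Qed.

Lemma lmulDl : left_distributive (@lmul F) (@ladd F).
Proof.
move=> x y z; apply: laurent_ext => k; pose m := Num.max (lub x) (lub y).
have hx : deg_le x m by apply: (deg_le_trans _ (deg_le_lub x)); rewrite le_max lexx.
have hy : deg_le y m.
  by apply: (deg_le_trans _ (deg_le_lub y)); rewrite le_max lexx orbT.
have hxy : deg_le (ladd x y) m by move=> i hi; rewrite lc_ladd hx ?hy ?addr0.
pose len := (absz (m + lub z - k)%R).+1.
have hlen : m - len%:Z < k - lub z by rewrite /len; lia.
have hz := deg_le_lub z.
rewrite lc_ladd (lc_lmul_window hxy hz (lexx m) hlen).
rewrite (lc_lmul_window hx hz (lexx m) hlen) (lc_lmul_window hy hz (lexx m) hlen).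
by rewrite -big_split; apply: eq_bigr => j _; rewrite lc_ladd mulrDl.
Qed.

Lemma laddA : associative (@ladd F).
Proof. by move=> x y z; apply: laurent_ext => i; rewrite !lc_ladd addrA. Qed.

Lemma laddC : commutative (@ladd F).
Proof. by move=> x y; apply: laurent_ext => i; rewrite !lc_ladd addrC. Qed.

Lemma ladd0 : left_id (lzero F) (@ladd F).
Proof.
by move=> x; apply: laurent_ext => i; rewrite lc_ladd /= /lconst_c; case: ifP;
  rewrite add0r.
Qed.

Lemma laddN : left_inverse (lzero F) (@lopp F) (@ladd F).
Proof.
by move=> x; apply: laurent_ext => i; rewrite lc_ladd lc_lopp addNr /= /lconst_c;
  case: ifP.
Qed.

Lemma lone_neq0 : lone F <> lzero F.
Proof.
by move=> /(congr1 (fun x => lc x 0)) /= /eqP; rewrite /lconst_c /= oner_eq0.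
Qed.

End LaurentRing.
Arguments deg_le_lub {F} x.

HB.instance Definition _ (F : finFieldType) := gen_eqMixin (laurent F).
HB.instance Definition _ (F : finFieldType) := gen_choiceMixin (laurent F).
HB.instance Definition _ (F : finFieldType) :=
  GRing.isZmodule.Build (laurent F) (@laddA F) (@laddC F) (@ladd0 F) (@laddN F).
HB.instance Definition _ (F : finFieldType) :=
  GRing.Zmodule_isComNzRing.Build (laurent F)
    (@lmulA F) (@lmulC F) (@lmul1 F) (@lmulDl F) (introN eqP (@lone_neq0 F)).

Section Embedding.
Variable F : finFieldType.
Local Notation R := (laurent F).

Lemma lc_lpoly (p : {poly F}) (z : int) :
  lc (lpoly p) z = if 0 <= z then p`_(absz z) else 0.
Proof. by case: z. Qed.

Lemma lc_lconst (c : F) (z : int) : lc (lconst c) z = if z == 0 then c else 0.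
Proof. by []. Qed.

Lemma lc_mul_monomial (x y : R) m : (forall i, i != m -> lc x i = 0) ->
  forall k, lc (x * y) k = lc x m * lc y (k - m).
Proof.
move=> xm k; have hx : deg_le x m by move=> i hi; rewrite xm ?gt_eqF.
rewrite (lc_lmul_window (top := m) (len := (absz (m + lub y - k)%R).+1) hx
  (deg_le_lub y)) //; last by lia.
rewrite big_ord_recl big1 ?addr0 => [|j _].
  by congr (_ * lc y _) => /=; lia.
by rewrite xm ?mul0r // lift0; apply/eqP; lia.
Qed.

Lemma lpoly_is_zmod_morphism : zmod_morphism (@lpoly F).
Proof.
move=> p r; apply: laurent_ext => z.
by rewrite lc_ladd lc_lopp !lc_lpoly coefB; case: ifP; rewrite ?subr0.
Qed.

HB.instance Definition _ :=
  GRing.isZmodMorphism.Build {poly F} R (@lpoly F) lpoly_is_zmod_morphism.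

Lemma lpolyC (c : F) : lpoly c%:P = lconst c.
Proof. by apply: laurent_ext => -[n|n] //=; rewrite coefC; case: n. Qed.

Lemma lpoly_mulC (c : F) p : lpoly (c%:P * p) = lconst c * lpoly p.
Proof.
apply: laurent_ext => k; rewrite (lc_mul_monomial _ (m := 0)) => [|i /negPf i0];
  last by rewrite lc_lconst i0.
by rewrite subr0 lc_lconst !lc_lpoly coefCM; case: ifP; rewrite ?mulr0.
Qed.

Lemma lpoly_mulX p : lpoly ('X * p) = lT F * lpoly p.
Proof.
have lcT z : lc (lT F) z = if z == 1 then 1 else 0.
  by rewrite lc_lpoly coefX; case: z => [[|[|n]]|n].
apply: laurent_ext => k; rewrite (lc_mul_monomial _ (m := 1)) => [|i /negPf i1];
  last by rewrite lcT i1.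
by rewrite lcT mul1r !lc_lpoly coefXM; case: k => [[|n]|n] //=; rewrite subn1.
Qed.

Lemma lpoly_is_monoid_morphism : monoid_morphism (@lpoly F).
Proof.
split; first exact: lpolyC.
move=> p r; elim/poly_ind: p => [|p c IH]; first by rewrite mul0r raddf0 mul0r.
have -> : (p * 'X + c%:P) * r = 'X * (p * r) + c%:P * r by ring.
rewrite [p * 'X]mulrC !raddfD /= !lpoly_mulX IH lpoly_mulC lpolyC; ring.
Qed.

HB.instance Definition _ :=
  GRing.isMonoidMorphism.Build {poly F} R (@lpoly F) lpoly_is_monoid_morphism.

Lemma lexpE (x : R) n : lexp x n = x ^+ n.
Proof. by elim: n => [|n IH] //; rewrite exprS -IH. Qed.

Lemma lconst_mulVf (c : F) : c != 0 -> lconst c^-1 * lconst c = 1.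
Proof. by move=> c0; rewrite -!lpolyC -rmorphM -polyCM mulVf // polyC1 rmorph1. Qed.

Lemma linv_eq (x y : R) : x * y = 1 -> linv x = y.
Proof.
move=> xy; rewrite /linv; case: excluded_middle_informative => [h|[]];
  last by exists y.
case: constructive_indefinite_description => z /= xz.
by rewrite -[z]mul1r -xy mulrC mulrA [z * x]mulrC [x * z]xz mul1r.
Qed.

Lemma deg_le0 m : deg_le (0 : R) m.
Proof. by move=> i _; rewrite lc_lconst; case: ifP. Qed.

Lemma deg_leN (x : R) m : deg_le x m -> deg_le (- x) m.
Proof. by move=> hx i hi; rewrite lc_lopp hx ?oppr0. Qed.

Lemma deg_leD (x y : R) m : deg_le x m -> deg_le y m -> deg_le (x + y) m.
Proof. by move=> hx hy i hi; rewrite lc_ladd hx ?hy ?addr0. Qed.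

Lemma deg_leB (x y : R) m : deg_le x m -> deg_le y m -> deg_le (x - y) m.
Proof. by move=> hx hy; apply/deg_leD/deg_leN. Qed.

Lemma deg_le_lconst (c : F) : deg_le (lconst c) 0.
Proof. by move=> i hi; rewrite lc_lconst gt_eqF. Qed.

Lemma deg_leX (x : R) m n : deg_le x m -> deg_le (x ^+ n) (m * n%:Z).
Proof.
move=> hx; elim: n => [|n IH]; first by rewrite mulr0; exact: (deg_le_lconst 1).
by rewrite exprS; apply: (deg_le_trans _ (deg_le_lmul hx IH)); lia.
Qed.

Lemma deg_le_lTX n : deg_le (lT F ^+ n) n%:Z.
Proof.
have hT : deg_le (lT F) 1.
  by move=> i hi; rewrite lc_lpoly coefX; case: i hi => [[|[|]]|].
by rewrite -[n%:Z]mul1r; apply: deg_leX.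
Qed.

Lemma lead_above (x : R) n : ~ deg_le x n ->
  exists t, [/\ n < t, lc x t != 0 & deg_le x t].
Proof.
move=> xn; pose top j := lub x - j%:Z.
have ex : exists j, (n < top j) && (lc x (top j) != 0).
  apply: contrapT => none; apply: xn => i ni; have [ilub|/lubP//] := lerP i (lub x).
  apply/eqP; apply: contrapT => xi; apply: none; exists (absz (lub x - i)%R).
  by rewrite /top (_ : lub x - _ = i) ?ni ?xi //; lia.
case: (ex_minnP ex) => j /andP[nj xj] jmin; exists (top j); split=> // i ji.
have [ilub|/lubP//] := lerP i (lub x); have ni := lt_trans nj ji.
apply/eqP; apply: contraTT ji => xi; rewrite -leNgt.
have := jmin (absz (lub x - i)%R); rewrite /top (_ : lub x - _ = i); last by lia.
by rewrite xi andbT => /(_ ni); lia.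
Qed.

Local Notation q := ((qF F)%:R : rat).

Lemma q_gt1 : 1 < q.
Proof. by rewrite ltr1n; apply: card_finNzRing_gt1. Qed.

Lemma q_expz_gt0 (m : int) : 0 < q ^ m.
Proof. by apply: exprz_gt0; apply: lt_trans q_gt1. Qed.

Lemma ldeg_lead (x : R) t : lc x t != 0 -> deg_le x t -> ldeg x = t.
Proof.
move=> xt hx; have ex : exists n, lc x n != 0 /\ forall i, n < i -> lc x i = 0.
  by exists t.
rewrite /ldeg; case: (epsilon_spec (inhabits 0) _ ex); set e := epsilon _ _.
move=> xe he; case: (ltgtP e t) => // et; first by move: xt; rewrite he ?eqxx.
by move: xe; rewrite hx ?eqxx.
Qed.

Lemma labs_cases (x : R) : (labs x = 0 /\ forall i, lc x i = 0) \/
  exists t, [/\ lc x t != 0, deg_le x t & labs x = q ^ t].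
Proof.
rewrite /labs; case: excluded_middle_informative => [[i xi]|none]; last first.
  left; split=> // i; case: (eqVneq (lc x i) 0) => // xi.
  by case: none; exists i.
have [|t [_ xt hx]] := @lead_above x (i - 1).
  by move=> hx; move: xi; rewrite hx ?eqxx //; lia.
by right; exists t; rewrite (ldeg_lead xt hx).
Qed.

Lemma labs_lt (x : R) m : labs x < q ^ m <-> deg_le x (m - 1).
Proof.
case: (labs_cases x) => [[-> x0]|[t [xt hx ->]]].
  by rewrite q_expz_gt0; split=> // _ i _.
rewrite (ltr_eXz2l q_gt1); split => [tm|hm].
  by apply: (deg_le_trans _ hx); lia.
by rewrite ltNge; apply: contraL xt => mt; rewrite hm ?eqxx //; lia.
Qed.

Lemma labs_eq (x : R) m : labs x = q ^ m -> lc x m != 0 /\ deg_le x m.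
Proof.
case: (labs_cases x) => [[-> _] /eqP|[t [xt hx ->]] /eqP].
  by rewrite eq_sym (gt_eqF (q_expz_gt0 m)).
by rewrite eq_le !(ler_eXz2l q_gt1) -eq_le => /eqP <-.
Qed.

Lemma labs_lt_eventually (e : rat) : 0 < e -> exists N0 : nat,
  forall N, (N0 <= N)%N -> forall z : R, deg_le z (- N%:Z - 1) -> labs z < e.
Proof.
move=> e0; exists (Num.bound e^-1) => N hN z /(labs_lt z (- N%:Z)).2 zN.
apply: (lt_le_trans zN); rewrite -invr_expz -[e]invrK lef_pV2 ?posrE
  ?invr_gt0 ?q_expz_gt0 //.
apply/ltW/(lt_le_trans (archi_boundP _)); first by rewrite invr_ge0 ltW.
apply: (@le_trans _ _ N%:R); first by rewrite ler_nat.
rewrite -exprnP -natrX ler_nat ltnW // ltn_expl //; exact: card_finNzRing_gt1.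
Qed.

Lemma deg_le_divl (x y : R) m t :
  lc x m != 0 -> deg_le x m -> deg_le (x * y) t -> deg_le y (t - m).
Proof.
move=> xm hx hxy; apply: contrapT => /lead_above[s [ts ys hy]].
have := lc_lmul_top hx hy; rewrite hxy; last by lia.
by move/esym/eqP; rewrite mulf_eq0 (negPf xm) (negPf ys).
Qed.

Lemma lpoly_deg_le0 (u : {poly F}) : deg_le (lpoly u) 0 -> u = (u`_0)%:P.
Proof.
move=> hu; apply/polyP => -[|k]; rewrite coefC //=.
by have := hu k.+1%:Z; rewrite lc_lpoly /=; apply.
Qed.

Lemma size_subl_lt (p r : {poly F}) : p != 0 -> size r = size p ->
  lead_coef r = lead_coef p -> (size (p - r)%R < size p)%N.
Proof.
move=> p0 srp lrp; have [n sp] : exists n, size p = n.+1.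
  by exists (size p).-1; rewrite prednK // size_poly_gt0.
rewrite sp ltnS; apply/leq_sizeP => k; rewrite coefB.
case: (ltngtP n k) => // [nk _|<- _]; first by rewrite !nth_default ?subrr ?srp ?sp.
by move: lrp; rewrite !lead_coefE srp sp /= => ->; rewrite subrr.
Qed.

End Embedding.

Section QuadraticUnit.
Variable F : finFieldType.
Local Notation R := (laurent F).
Local Notation T := (lT F).
Local Notation q := ((qF F)%:R : rat).
Variables (a : {poly F}) (b : F) (f : R).
Local Notation d := (size a).-1.
Hypothesis a_monic : a \is monic.
Hypothesis d_gt0 : (0 < d)%N.
Hypothesis b_neq0 : b != 0.
Hypothesis f_root : f * f = lpoly a * f + lconst b.
Hypothesis labs_f : labs f = q ^ d%:Z.

Definition fconj := lpoly a - f.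

Lemma fconj_root : fconj * fconj = lpoly a * fconj + lconst b.
Proof. by rewrite /fconj; ring: f_root. Qed.

Lemma f_mul_fconj : f * fconj = - lconst b.
Proof. by rewrite /fconj; ring: f_root. Qed.

Let lconst_mulVb := lconst_mulVf b_neq0.

Lemma deg_le_fconj : deg_le fconj (- d%:Z).
Proof.
have [fd hf] := labs_eq labs_f.
have := deg_le_divl fd hf (_ : deg_le (f * fconj) 0); rewrite sub0r; apply.
by rewrite f_mul_fconj; apply/deg_leN/deg_le_lconst.
Qed.

Definition finv := - lconst b^-1 * fconj.

Lemma deg_le_finv : deg_le finv (- d%:Z).
Proof.
by rewrite -[- d%:Z]add0r; apply/deg_le_lmul/deg_le_fconj/deg_leN/deg_le_lconst.
Qed.

Lemma f_mul_finv : f * finv = 1.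
Proof. by rewrite /finv; ring: f_mul_fconj lconst_mulVb. Qed.

Lemma linv_fexp N : linv (lexp f N) = finv ^+ N.
Proof. by rewrite lexpE; apply: linv_eq; rewrite -exprMn f_mul_finv expr1n. Qed.

Lemma sqrtD_eq : sqrtD a f = f - fconj.
Proof.
rewrite /sqrtD /fconj; case: ifP => char2; last first.
  by change (f + f - lpoly a = f - (lpoly a - f)); ring.
have two x : x + x = 0 :> R.
  apply: laurent_ext => i; rewrite lc_ladd -mulr2n -mulr_natl (pcharf0 char2).
  by rewrite mul0r lc_lconst if_same.
by apply/eqP; rewrite opprB addrA two sub0r -subr_eq0 opprK two.
Qed.

(* Conjugation is encoded as a relation through a common representation
   [u + v f]. *)
Definition is_conjugate (y s : R) := exists u v : {poly F},
  y = lpoly u + lpoly v * f /\ s = lpoly u + lpoly v * fconj.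

Lemma is_conjugate_lpoly u : is_conjugate (lpoly u) (lpoly u).
Proof. by exists u, 0; rewrite raddf0 !mul0r !addr0. Qed.

Lemma is_conjugate_lconst c : is_conjugate (lconst c) (lconst c).
Proof. by rewrite -lpolyC; apply: is_conjugate_lpoly. Qed.

Lemma is_conjugate_f : is_conjugate f fconj.
Proof. by exists 0, 1; rewrite raddf0 rmorph1 !mul1r !add0r. Qed.

Lemma is_conjugateD y s y' s' :
  is_conjugate y s -> is_conjugate y' s' -> is_conjugate (y + y') (s + s').
Proof.
move=> [u [v [-> ->]]] [u' [v' [-> ->]]]; exists (u + u'), (v + v').
by rewrite !raddfD; split; ring.
Qed.

Lemma is_conjugateN y s : is_conjugate y s -> is_conjugate (- y) (- s).
Proof.
by move=> [u [v [-> ->]]]; exists (- u), (- v); rewrite !raddfN; split; ring.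
Qed.

Lemma is_conjugateB y s y' s' :
  is_conjugate y s -> is_conjugate y' s' -> is_conjugate (y - y') (s - s').
Proof. by move=> ys /is_conjugateN; apply: is_conjugateD. Qed.

Lemma mul_lin_root (r : R) u v u' v' : r * r = lpoly a * r + lconst b ->
  (lpoly u + lpoly v * r) * (lpoly u' + lpoly v' * r) =
  lpoly (u * u' + b%:P * (v * v')) + lpoly (u * v' + u' * v + a * (v * v')) * r.
Proof. by move=> r_root; rewrite !rmorphD !rmorphM /= lpolyC; ring: r_root. Qed.

Lemma is_conjugateM y s y' s' :
  is_conjugate y s -> is_conjugate y' s' -> is_conjugate (y * y') (s * s').
Proof.
move=> [u [v [-> ->]]] [u' [v' [-> ->]]].
exists (u * u' + b%:P * (v * v')), (u * v' + u' * v + a * (v * v')).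
by rewrite !mul_lin_root //; apply: fconj_root.
Qed.

Lemma is_conjugateX y s n : is_conjugate y s -> is_conjugate (y ^+ n) (s ^+ n).
Proof.
move=> ys; elim: n => [|n IH]; last by rewrite !exprS; apply: is_conjugateM.
by rewrite !expr0 -(rmorph1 (@lpoly F)); apply: is_conjugate_lpoly.
Qed.

Lemma is_conjugate_fconj : is_conjugate fconj f.
Proof. by exists a, (-1); rewrite /fconj rmorphN rmorph1; split; ring. Qed.

Lemma is_conjugate_gen j : is_conjugate (f * T ^+ j) (fconj * T ^+ j).
Proof.
apply: is_conjugateM; first exact: is_conjugate_f.
by apply: is_conjugateX; apply: is_conjugate_lpoly.
Qed.

Lemma deg_le_fconj_lT j : deg_le (fconj * T ^+ j) (j%:Z - d%:Z).
Proof.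
by apply: (deg_le_trans _ (deg_le_lmul deg_le_fconj (deg_le_lTX F (n := j)))); lia.
Qed.

Lemma Ainf1_conj y : in_Ainf1 d f y -> exists2 s, is_conjugate y s & deg_le s 0.
Proof.
elim=> [c|j jd|y1 y2 _ [s1 ys1 hs1] _ [s2 ys2 hs2]|y1 y2 _ [s1 ys1 hs1] _ [s2 ys2 hs2]].
- by exists (lconst c); [apply: is_conjugate_lconst | apply: deg_le_lconst].
- rewrite lexpE; exists (fconj * T ^+ j); first exact: is_conjugate_gen.
  by apply: (deg_le_trans _ (deg_le_fconj_lT (j := j))); lia.
- by exists (s1 + s2); [apply: is_conjugateD | apply: deg_leD].
- by exists (s1 * s2); [apply: is_conjugateM | rewrite -(addr0 0); apply: deg_le_lmul].
Qed.

Lemma ideal_conj i y :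
  in_ideal d f i y -> exists2 s, is_conjugate y s & deg_le s (i%:Z - d%:Z).
Proof.
elim=> [|g j /Ainf1_conj[s gs hs] ji|y1 y2 _ [s1 ys1 hs1] _ [s2 ys2 hs2]].
- by exists 0; [apply: (is_conjugate_lconst 0) | apply: deg_le0].
- rewrite lexpE; exists (s * (fconj * T ^+ j)).
    by apply: is_conjugateM => //; apply: is_conjugate_gen.
  by apply: (deg_le_trans _ (deg_le_lmul hs (deg_le_fconj_lT (j := j)))); lia.
- by exists (s1 + s2); [apply: is_conjugateD | apply: deg_leD].
Qed.

Lemma mul_root_lin (r : R) U V : r * r = lpoly a * r + lconst b ->
  r * (lpoly U + lpoly V * r) = lpoly (b%:P * V) + lpoly (U + a * V) * r.
Proof. by move=> r_root; rewrite rmorphD !rmorphM /= lpolyC; ring: r_root. Qed.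

Lemma size_a : size a = d.+1.
Proof. by rewrite prednK // size_poly_gt0 monic_neq0. Qed.

Lemma fexp_decomp m : exists U V : {poly F},
  [/\ f ^+ m.+1 = lpoly U + lpoly V * f, fconj ^+ m.+1 = lpoly U + lpoly V * fconj,
      V \is monic, size V = (m * d).+1 & (size U < size V)%N].
Proof.
elim: m => [|m [U [V [fm fcm mV sV sU]]]].
  exists 0, 1; rewrite raddf0 rmorph1 !add0r !mul1r !expr1.
  by rewrite monic1 size_poly1 size_poly0.
have saV : size (a * V) = (m.+1 * d).+1.
  by rewrite size_monicM ?monic_neq0 // size_a sV mulSn; set md := (m * d)%N; lia.
have sUaV : (size U < size (a * V)%R)%N.
  by rewrite saV mulSn; move: sU; rewrite sV; set md := (m * d)%N; lia.
exists (b%:P * V), (U + a * V); rewrite exprS fm [fconj ^+ _]exprS fcm.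
rewrite !mul_root_lin //; last exact: fconj_root.
split => //.
- by rewrite monicE lead_coefDr // lead_coefM (monicP a_monic) (monicP mV) mulr1.
- by rewrite addrC size_polyDl // saV.
- by rewrite addrC size_polyDl // saV size_Cmul // sV mulSn; set md := (m * d)%N; lia.
Qed.

Lemma Ainf1_gen_mul j : (j < d)%N -> in_Ainf1 d f (f * T ^+ j).
Proof. by move=> jd; rewrite -lexpE; apply: Ainf1_gen. Qed.

Lemma Ainf1_fexp k : in_Ainf1 d f (f ^+ k).
Proof.
have Af : in_Ainf1 d f f by have := Ainf1_gen_mul d_gt0; rewrite expr0 mulr1.
elim: k => [|k IH]; first exact: (Ainf1_const d f 1).
by rewrite exprS; apply: Ainf1_mul.
Qed.

(* With [size v = (m * d + j).+1], [j < d], the element [c T^j f^(m+1)] of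
   [A_oo1] matches the leading coefficient of [v]. *)
Lemma Ainf1_lead_term v : v != 0 -> exists u w : {poly F},
  [/\ (size (v - w)%R < size v)%N, in_Ainf1 d f (lpoly u + lpoly w * f)
    & deg_le (lpoly u + lpoly w * fconj) 0].
Proof.
move=> v0; pose n := (size v).-1; pose m := (n %/ d)%N; pose j := (n %% d)%N.
have jd : (j < d)%N by rewrite ltn_pmod.
have [U [V [fm fcm mV sV _]]] := fexp_decomp m.
pose c := lead_coef v; have c0 : c != 0 by rewrite lead_coef_eq0.
pose w := c%:P * 'X^j * V.
have split_w r : r ^+ m.+1 = lpoly U + lpoly V * r ->
    lpoly (c%:P * 'X^j * U) + lpoly w * r = lconst c * (r ^+ m * (r * T ^+ j)).
  move=> rm; have -> : r ^+ m * (r * T ^+ j) = r ^+ m.+1 * T ^+ j.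
    by rewrite exprSr; ring.
  by rewrite rm /w !rmorphM rmorphXn /= lpolyC -/(lT F); ring.
exists (c%:P * 'X^j * U), w; split.
- apply: size_subl_lt => //; last first.
    by rewrite !lead_coefM lead_coefC lead_coefXn (monicP mV) !mulr1.
  rewrite /w -mulrA size_Cmul // size_monicM ?monicXn ?monic_neq0 // size_polyXn sV.
  rewrite -[size v]prednK ?size_poly_gt0 // -/n [in RHS](divn_eq n d) -/m -/j.
  by set md := (m * d)%N; lia.
- rewrite (split_w _ fm); apply: Ainf1_mul; first exact: Ainf1_const.
  by apply: Ainf1_mul; [apply: Ainf1_fexp | apply: Ainf1_gen_mul].
- rewrite (split_w _ fcm) -[0]add0r; apply: deg_le_lmul; first exact: deg_le_lconst.
  apply: (deg_le_trans _ (deg_le_lmul (deg_leX (n := m) deg_le_fconj)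
    (deg_le_fconj_lT (j := j)))).
  by rewrite mulNr -PoszM; set md := (d * m)%N; lia.
Qed.

Lemma Ainf1_of_conj y s : is_conjugate y s -> deg_le s 0 -> in_Ainf1 d f y.
Proof.
case=> u [v [-> ->]]; have [n] := ubnP (size v); elim: n => // n IH in u v *.
rewrite ltnS => sv hs; have [v0|v0] := eqVneq v 0.
  move: hs; rewrite v0 raddf0 !mul0r !addr0 => /lpoly_deg_le0 ->.
  by rewrite lpolyC; apply: Ainf1_const.
have [u' [w [vw Aw hw]]] := Ainf1_lead_term v0.
have -> : lpoly u + lpoly v * f =
    (lpoly (u - u') + lpoly (v - w) * f) + (lpoly u' + lpoly w * f).
  by rewrite !raddfB; ring.
apply: Ainf1_add Aw; apply: IH; first exact: leq_trans vw sv.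
have -> : lpoly (u - u') + lpoly (v - w) * fconj =
    (lpoly u + lpoly v * fconj) - (lpoly u' + lpoly w * fconj).
  by rewrite !raddfB; ring.
exact: deg_leB.
Qed.

Lemma is_conjugate_divf y s : is_conjugate y s ->
  exists y' s', [/\ y = f * y', s = fconj * s' & is_conjugate y' s'].
Proof.
case=> u [v [-> ->]]; pose u' := v - u * a * (b^-1)%:P; pose v' := u * (b^-1)%:P.
have div r : r * r = lpoly a * r + lconst b ->
    lpoly u + lpoly v * r = r * (lpoly u' + lpoly v' * r).
  by move=> r_root; rewrite !rmorphB !rmorphM /= lpolyC; ring: r_root lconst_mulVb.
exists (lpoly u' + lpoly v' * f), (lpoly u' + lpoly v' * fconj).
by split; [exact: div | exact/div/fconj_root | exists u', v'].
Qed.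

Lemma ideal_f_mul_poly i (Q : {poly F}) :
  (size Q <= i.+1)%N -> in_ideal d f i (f * lpoly Q).
Proof.
move=> sQ; rewrite -[Q]coefK poly_def rmorph_sum mulr_sumr.
apply: (big_ind (in_ideal d f i)); [exact: ideal0 | exact: ideal_add |].
move=> k _; rewrite -mul_polyC rmorphM rmorphXn /= lpolyC -/(lT F).
have -> : f * (lconst Q`_k * T ^+ k) = lconst Q`_k * (f * lexp T k).
  by rewrite lexpE; ring.
by apply: ideal_gen; [apply: Ainf1_const | rewrite -ltnS (leq_trans (ltn_ord k))].
Qed.

Lemma ideal_of_conj i y s :
  is_conjugate y s -> deg_le s (i%:Z - d%:Z) -> in_ideal d f i y.
Proof.
move=> ys hs; have [y' [s' [-> es ys']]] := is_conjugate_divf ys.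
have hs' : deg_le s' i%:Z.
  have -> : s' = - lconst b^-1 * f * s by rewrite es; ring: f_mul_fconj lconst_mulVb.
  have [_ hf] := labs_eq labs_f.
  apply: (deg_le_trans _ (deg_le_lmul (deg_le_lmul
    (deg_leN (deg_le_lconst b^-1)) hf) hs)); lia.
pose Q := \poly_(k < i.+1) lc s' k%:Z.
have AyQ : in_Ainf1 d f (y' - lpoly Q).
  apply: Ainf1_of_conj (is_conjugateB ys' (is_conjugate_lpoly Q)) _ => k k0.
  rewrite lc_ladd lc_lopp lc_lpoly ifT ?coef_poly; last by lia.
  case: ltnP => ki; first by rewrite (_ : (absz k)%:Z = k) ?subrr //; lia.
  by rewrite hs' ?subr0 //; lia.
have -> : f * y' = (y' - lpoly Q) * (f * lexp T 0) + f * lpoly Q.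
  by rewrite lexpE; ring.
exact: ideal_add (ideal_gen AyQ (leq0n i)) (ideal_f_mul_poly (size_poly _ _)).
Qed.

Lemma is_conjugate_finv : is_conjugate finv (- lconst b^-1 * f).
Proof.
apply: is_conjugateM; last exact: is_conjugate_fconj.
exact/is_conjugateN/is_conjugate_lconst.
Qed.

Lemma Lambda_near_ideal l N (lam p : {poly F}) : (l < d)%N ->
  deg_le (lpoly lam * f - lpoly p) (- (d * N + l)%N%:Z - 1) ->
  exists y, in_ideal d f (d - 1 - l) y /\
    deg_le (linv (lexp f N) * sqrtD a f * lpoly lam - y) (- N%:Z - 1).
Proof.
move=> ld hz; set z := lpoly lam * f - lpoly p in hz.
exists (- finv ^+ N * (lpoly lam * fconj - lpoly p)); split.
  apply: (@ideal_of_conj _ _ (- (- lconst b^-1 * f) ^+ N * z)).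
    apply: is_conjugateM; first exact/is_conjugateN/is_conjugateX/is_conjugate_finv.
    apply: is_conjugateB (is_conjugate_lpoly p).
    exact: is_conjugateM (is_conjugate_lpoly lam) is_conjugate_fconj.
  have [_ hf] := labs_eq labs_f.
  have hbf : deg_le (- lconst b^-1 * f) d%:Z.
    by rewrite -[d%:Z]add0r; apply/deg_le_lmul/hf/deg_leN/deg_le_lconst.
  by apply: (deg_le_trans _ (deg_le_lmul (deg_leN (deg_leX (n := N) hbf)) hz)); nia.
rewrite linv_fexp sqrtD_eq.
have -> : finv ^+ N * (f - fconj) * lpoly lam -
    - finv ^+ N * (lpoly lam * fconj - lpoly p) = finv ^+ N * z by rewrite /z; ring.
by apply: (deg_le_trans _ (deg_le_lmul (deg_leX (n := N) deg_le_finv) hz)); nia.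
Qed.

Lemma ideal_near_Lambda l N y : (l < d)%N -> in_ideal d f (d - 1 - l) y ->
  exists lam p : {poly F},
    deg_le (lpoly lam * f - lpoly p) (- (d * N + l)%N%:Z - 1) /\
    deg_le (linv (lexp f N) * sqrtD a f * lpoly lam - y) (- N%:Z - 1).
Proof.
move=> ld /ideal_conj[s ys hs].
have [U [V [eU eV]]] := is_conjugateM (is_conjugateX N is_conjugate_f) ys.
have hfs : deg_le (fconj ^+ N * s) (- (d * N + l)%N%:Z - 1).
  by apply: (deg_le_trans _ (deg_le_lmul (deg_leX (n := N) deg_le_fconj) hs)); nia.
exists V, (U + V * a); split.
  have -> : lpoly V * f - lpoly (U + V * a) = - (fconj ^+ N * s).
    by rewrite eV rmorphD rmorphM /fconj; ring.
  exact: deg_leN.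
rewrite linv_fexp sqrtD_eq.
have -> : y = finv ^+ N * (f ^+ N * y).
  by rewrite mulrA -exprMn [finv * f]mulrC f_mul_finv expr1n mul1r.
have -> : finv ^+ N * (f - fconj) * lpoly V - finv ^+ N * (f ^+ N * y) =
    - (finv ^+ N * (fconj ^+ N * s)) by rewrite eU eV; ring.
apply/deg_leN/(deg_le_trans _ (deg_le_lmul (deg_leX (n := N) deg_le_finv) hfs)).
nia.
Qed.

End QuadraticUnit.

Theorem proposition1 (F : finFieldType) (a : {poly F}) (b : F) (f : laurent F) :
  a \is monic -> (1 <= (size a).-1)%N -> b != 0 ->
  (* f is a root of X^2 - aX - b *)
  lmul f f = ladd (lmul (lpoly a) f) (lconst b) ->
  (* |f| = q^d *)
  labs f = (qF F)%:R ^ ((size a).-1)%:Z ->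
  (* f is not in k = F_q(T) *)
  ~ (exists p r : {poly F}, r != 0 /\ lmul (lpoly r) f = lpoly p) ->
  forall l : nat, (l < (size a).-1)%N ->
  hausdorff_cvg
    (fun N : nat => fun y : laurent F =>
       exists lam : {poly F},
         Lambda f ((qF F)%:R ^ (- ((size a).-1 * N + l)%N%:Z)) lam /\
         y = lmul (lmul (linv (lexp f N)) (sqrtD a f)) (lpoly lam))
    (in_ideal ((size a).-1) f ((size a).-1 - 1 - l)).
Proof.
(* [f \notin k] is implied by the other hypotheses and not needed. *)
move=> a_monic d_gt0 b_neq0 f_root labs_f _ l ld e e_gt0.
have [N0 small] := labs_lt_eventually F e_gt0.
exists N0 => N NN0; split.
- move=> _ [lam [[p /labs_lt near_p] ->]].
  have [y [Iy near_y]] :=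
    Lambda_near_ideal a_monic d_gt0 b_neq0 f_root labs_f ld near_p.
  by exists y; split => //; apply: small near_y.
- move=> y Iy; have [lam [p [near_p near_y]]] :=
    ideal_near_Lambda a_monic d_gt0 b_neq0 f_root labs_f N ld Iy.
  exists (linv (lexp f N) * sqrtD a f * lpoly lam); split; last exact: small near_y.
  by exists lam; split => //; exists p; apply/labs_lt.
Qed.
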